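(* Let $\theta\in[0,1]^V$ be a feasible solution on a unit-weight graph with $n=|V|$ vertices. Then $\|W\theta\|_1\ge n+\|\theta\|_1-\mathsf{OPT}$.
   Context: For a unit-weight graph, $W$ is a symmetric $\{0,1\}$ matrix with $W_{v,v}=1$ (adjacency matrix plus identity). A vector $\theta\in\mathbb{R}_{\ge0}^V$ is feasible if $W\theta\ge\mathbf 1$ coordinatewise. $\mathsf{OPT}=\min\{\|\theta\|_1:\theta\ge0,\ W\theta\ge\mathbf 1\}$. *)

From HB Require Import structures.
From mathcomp Require Import all_boot all_order all_algebra.
From mathcomp Require Import classical_sets reals.
Set Implicit Arguments. Unset Strict Implicit. Unset Printing Implicit Defensive.
Import Order.TTheory GRing.Theory Num.Theory.
Local Open Scope ring_scope.
Local Open Scope classical_set_scope.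

Definition simple_graph (V : finType) (e : rel V) : Prop :=
  symmetric e /\ irreflexive e.

Definition Wmx (R : pzRingType) (V : finType) (e : rel V) (u v : V) : R :=
  if (u == v) || e u v then 1 else 0.

Definition Wapply (R : pzRingType) (V : finType) (e : rel V) (theta : V -> R) (v : V) : R :=
  \sum_(u : V) Wmx R e v u * theta u.

Definition l1norm (R : numDomainType) (V : finType) (x : V -> R) : R :=
  \sum_(v : V) `|x v|.

Definition feasible (R : numDomainType) (V : finType) (e : rel V) (theta : V -> R) : Prop :=
  (forall v, 0 <= theta v) /\ (forall v, 1 <= Wapply e theta v).

(* OPT = min { ||theta||_1 : theta feasible } (taken as the infimum; the
   minimum is attained for this LP). *)
Definition OPT (R : realType) (V : finType) (e : rel V) : R :=
  inf [set x : R | exists theta : V -> R, feasible e theta /\ x = l1norm theta].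

From HB Require Import structures.
From mathcomp Require Import all_boot all_order all_algebra.
From mathcomp Require Import classical_sets reals.
From mathcomp Require Import ring lra.
Set Implicit Arguments. Unset Strict Implicit. Unset Printing Implicit Defensive.
Import Order.TTheory GRing.Theory Num.Theory.
Local Open Scope ring_scope.

(** Let [φ] be any feasible solution; capping it at [1] keeps it feasible and
    only decreases its norm, so we may assume [φ ≤ 1].  As [W] is symmetric,
    [‖θ‖₁ = Σ_u θ_u ≤ Σ_u θ_u (Wφ)_u = Σ_v φ_v (Wθ)_v], and each term satisfies
    [φ_v (Wθ)_v ≤ (Wθ)_v - 1 + φ_v] because [(1 - φ_v)((Wθ)_v - 1) ≥ 0].
    Summing gives [‖θ‖₁ ≤ ‖Wθ‖₁ - n + ‖φ‖₁], and taking the infimum over [φ]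
    gives the claim. *)

Lemma Wmx_sym (R : pzRingType) (V : finType) (e : rel V) :
  symmetric e -> forall u v, Wmx R e u v = Wmx R e v u.
Proof. by move=> e_sym u v; rewrite /Wmx eq_sym e_sym. Qed.

Lemma sum_mul_WapplyC (R : comPzRingType) (V : finType) (e : rel V) :
  symmetric e -> forall phi theta : V -> R,
  \sum_v phi v * Wapply e theta v = \sum_u theta u * Wapply e phi u.
Proof.
move=> e_sym phi theta; rewrite /Wapply.
under eq_bigr do rewrite big_distrr.
rewrite exchange_big; apply: eq_bigr => u _; rewrite big_distrr.
by apply: eq_bigr => v _; rewrite /= (Wmx_sym _ e_sym v u); ring.
Qed.

Section CoveringLP.
Variable R : realDomainType.

Lemma min1D_le (a b : R) : 0 <= a -> 0 <= b ->
  Order.min (a + b) 1 <= Order.min a 1 + Order.min b 1.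
Proof.
move=> a_ge0 b_ge0.
case: (leP a 1) => [a_le1|a_gt1]; case: (leP b 1) => [b_le1|b_gt1];
  rewrite ?ge_min; lra.
Qed.

Lemma min_sum_le_sum_min1 (I : Type) (r : seq I) (a : I -> R) :
  (forall i, 0 <= a i) ->
  Order.min (\sum_(i <- r) a i) 1 <= \sum_(i <- r) Order.min (a i) 1.
Proof.
move=> a_ge0; elim: r => [|i r IHr]; first by rewrite !big_nil ge_min lexx.
rewrite !big_cons; apply: le_trans (min1D_le (a_ge0 i) _) _.
  exact: sumr_ge0.
by rewrite lerD2l.
Qed.

Variables (V : finType) (e : rel V).

Lemma Wmx_mul_min1 (u v : V) (x : R) :
  Wmx R e u v * Order.min x 1 = Order.min (Wmx R e u v * x) 1.
Proof. by rewrite /Wmx; case: ifP => _; rewrite ?mul1r // !mul0r min_l ?ler01. Qed.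

Lemma feasible_min1 (phi : V -> R) :
  feasible e phi -> feasible e (fun v => Order.min (phi v) 1).
Proof.
move=> [phi_ge0 Wphi_ge1]; split=> [v|v]; first by rewrite le_min phi_ge0 ler01.
have Wmx_ge0 u : 0 <= Wmx R e v u by rewrite /Wmx; case: ifP.
rewrite /Wapply; under eq_bigr do rewrite Wmx_mul_min1.
apply: le_trans (min_sum_le_sum_min1 _ _) => [|u].
  by rewrite le_min Wphi_ge1 lexx.
exact: mulr_ge0.
Qed.

Lemma ger0_l1norm (x : V -> R) : (forall v, 0 <= x v) -> l1norm x = \sum_v x v.
Proof. by move=> x_ge0; apply: eq_bigr => v _; rewrite ger0_norm. Qed.

Hypothesis e_sym : symmetric e.

Lemma le_l1norm_Wapply_capped (theta p : V -> R) :
  feasible e theta -> feasible e p -> (forall v, p v <= 1) ->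
  #|V|%:R + l1norm theta - l1norm p <= l1norm (Wapply e theta).
Proof.
move=> [theta_ge0 Wtheta_ge1] [p_ge0 Wp_ge1] p_le1.
have Wtheta_ge0 v : 0 <= Wapply e theta v by apply: le_trans ler01 _.
have theta_le : l1norm theta <= \sum_v p v * Wapply e theta v.
  rewrite sum_mul_WapplyC // ger0_l1norm //; apply: ler_sum => u _.
  by rewrite ler_peMr.
have pWtheta_le : \sum_v p v * Wapply e theta v
                  <= \sum_v (Wapply e theta v - 1 + p v).
  apply: ler_sum => v _.
  have := p_le1 v; have := p_ge0 v; have := Wtheta_ge1 v; nra.
move: theta_le pWtheta_le; rewrite big_split sumrB sumr_const /=.
by rewrite -(ger0_l1norm p_ge0) -(ger0_l1norm Wtheta_ge0); lra.
Qed.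

Lemma le_l1norm_Wapply (theta phi : V -> R) :
  feasible e theta -> feasible e phi ->
  #|V|%:R + l1norm theta - l1norm phi <= l1norm (Wapply e theta).
Proof.
move=> theta_feas phi_feas.
apply: le_trans (le_l1norm_Wapply_capped theta_feas (feasible_min1 phi_feas) _).
  rewrite lerD2l lerN2; apply: ler_sum => v _.
  by rewrite !ger0_norm ?ge_min ?lexx ?le_min ?(proj1 phi_feas) ?ler01.
by move=> v; rewrite ge_min lexx orbT.
Qed.

End CoveringLP.

Theorem lemma5p8 (R : realType) (V : finType) (e : rel V)
  (He : simple_graph e) (theta : V -> R)
  (Hfeas : feasible e theta) (H01 : forall v, 0 <= theta v <= 1) :
  l1norm (Wapply e theta) >= #|V|%:R + l1norm theta - OPT R e.
Proof.
have le_OPT : #|V|%:R + l1norm theta - l1norm (Wapply e theta) <= OPT R e.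
  apply: lb_le_inf => [|_ [phi [phi_feas ->]]]; first by exists (l1norm theta), theta.
  have := le_l1norm_Wapply (proj1 He) Hfeas phi_feas; lra.
lra.
Qed.
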